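(* Fix $\Delta>1$. Consider a matrix $M\in\mathbb{F}_2^{m\times n}$ that can be used for $\Delta$-approximation of $d=\|\mathbf{x}\|_0$ in the group testing model with only the trivial upper bound $D=n$ on $d$ (i.e. for all $\mathbf{x}\in\mathbb{F}_2^n$). Then for large $n$ it is necessary that $$m\ge n\left(h\!\left(\frac{1}{\Delta^4}\right)-\frac{1}{\Delta^2}h\!\left(\frac{1}{\Delta^2}\right)\right)=\Omega(n),$$ where $h$ is the binary entropy function.
   Context: $\|\mathbf{x}\|_0$ is the number of nonzero entries of $\mathbf{x}$. Group testing model: $(M\odot\mathbf{x})_i=\bigvee_{j:M_{ij}=1}\mathbf{x}_j$. $M$ can be used for $\Delta$-approximation if some deterministic decoder, given only $M\odot\mathbf{x}$, outputs $\hat d$ with $\frac1\Delta\le\hat d/d\le\Delta$ for every admissible $\mathbf{x}$. $h(x)=-x\log_2 x-(1-x)\log_2(1-x)$. *)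

From mathcomp Require Import all_boot all_algebra.
From Stdlib Require Import Reals.

Set Implicit Arguments.
Unset Strict Implicit.
Unset Printing Implicit Defensive.

(* F_2 is represented by bool (1 = true). A test matrix M in F_2^{m x n}. *)

Definition weight (n : nat) (x : 'rV[bool]_n) : nat :=
  #|[set j : 'I_n | x ord0 j]|.

Definition gt_outcome (m n : nat) (M : 'M[bool]_(m, n)) (x : 'rV[bool]_n)
  : {ffun 'I_m -> bool} :=
  [ffun i => [exists j : 'I_n, M i j && x ord0 j]].

Local Open Scope R_scope.

Definition log2 (x : R) : R := ln x / ln 2.

Definition h (x : R) : R := - x * log2 x - (1 - x) * log2 (1 - x).

(* M can be used for Delta-approximation of d = ||x||_0 with the trivial
   upper bound D = n: some deterministic decoder, seeing only M (.) x,
   outputs dhat with 1/Delta <= dhat/d <= Delta for every nonzero x. *)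
Definition approx_usable (Delta : R) (m n : nat) (M : 'M[bool]_(m, n)) : Prop :=
  exists dec : {ffun 'I_m -> bool} -> R,
    forall x : 'rV[bool]_n, (0 < weight x)%nat ->
      1 / Delta <= dec (gt_outcome M x) / INR (weight x) <= Delta.

From mathcomp Require Import all_boot all_algebra.
From Stdlib Require Import Reals.
From mathcomp Require Import Rstruct lra ring.
Import mathcomp.order.order.Order.TTheory GRing.Theory Num.Theory.
Set Implicit Arguments.
Unset Strict Implicit.
Unset Printing Implicit Defensive.
Local Open Scope ring_scope.

(* Let x have i.i.d. Bernoulli(b^2) coordinates, b = 1/Delta^2, so that its
   entropy is n h(b^2).  Since the decoder Delta-approximates the weight, two
   nonzero inputs with the same outcome y have weights within a factor 1/b;
   hence x lies in the hull U(y) of all supports with outcome y, and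
   |U(y)| <= |x|/b.  Describing x by y (m bits) followed by a Bernoulli(b)
   code inside U(y), Gibbs' inequality gives
     n h(b^2) <= m + E[|x| log(1/b) + |U(y) \ x| log(1/(1-b))] <= m + n b h(b).
   The all-zero columns of M are invisible to every test and spoil the bound
   on |U(y)| when x lives on them; but there are at most 1/b of them, and for
   large n this event has probability at most b, so it costs no more than the
   null columns save in the estimate of E|U(y)|. *)

Lemma lnM (x y : R) : 0 < x -> 0 < y -> ln (x * y) = ln x + ln y.
Proof. by move=> /RltP x0 /RltP y0; rewrite ln_mult. Qed.

Lemma lnV (x : R) : 0 < x -> ln x^-1 = - ln x.
Proof. by move=> /RltP x0; rewrite -RinvE ln_Rinv. Qed.

Lemma ln_expn (x : R) k : 0 < x -> ln (x ^+ k) = k%:R * ln x.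
Proof. by move=> /RltP x0; rewrite -RpowE ln_pow // INRE. Qed.

Lemma ln_le_subr1 (t : R) : 0 < t -> ln t <= t - 1.
Proof.
move=> /RltP t0; have /RleP := exp_ineq1_le (ln t).
by rewrite exp_ln // RplusE R1E; lra.
Qed.

Lemma ln_le0 (t : R) : 0 < t -> t <= 1 -> ln t <= 0.
Proof. by move=> t0 t1; have := ln_le_subr1 t0; lra. Qed.

Lemma ln2_gt0 : 0 < ln 2 :> R.
Proof.
have /RltP := ln_increasing 1 2 Rlt_0_1 (Rlt_n_Sn 1).
by rewrite ln_1.
Qed.

Lemma ln_prod (I : Type) (r : seq I) (P : pred I) (f : I -> R) :
  (forall i, P i -> 0 < f i) ->
  ln (\prod_(i <- r | P i) f i) = \sum_(i <- r | P i) ln (f i).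
Proof.
move=> f_gt0; elim: r => [|i r IH]; first by rewrite !big_nil ln_1.
rewrite !big_cons; case: ifP => Pi //.
by rewrite lnM ?IH ?f_gt0 //; apply: prodr_gt0.
Qed.

Lemma gibbs (I : finType) (p q : I -> R) :
    (forall i, 0 < p i) -> (forall i, 0 < q i) ->
    \sum_i p i = 1 -> \sum_i q i <= 1 ->
  \sum_i p i * - ln (p i) <= \sum_i p i * - ln (q i).
Proof.
move=> p_gt0 q_gt0 sum_p sum_q.
have le_term i : p i * - ln (p i) + (p i - q i) <= p i * - ln (q i).
  have pi_gt0 := p_gt0 i.
  have := ln_le_subr1 (divr_gt0 (q_gt0 i) pi_gt0).
  rewrite lnM ?invr_gt0 // lnV // => /(ler_wpM2l (ltW pi_gt0)).
  have -> : p i * (q i / p i - 1) = q i - p i by field; rewrite gt_eqF.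
  lra.
apply: le_trans (ler_sum _ (fun i _ => le_term i)).
by rewrite big_split /= sumrB sum_p; lra.
Qed.

Lemma natr_card_sum (I : finType) (A : {set I}) : #|A|%:R = \sum_i (i \in A)%:R :> R.
Proof.
rewrite -sum1_card natr_sum big_mkcond.
by apply: eq_bigr => i _; case: (i \in A).
Qed.

Lemma sum_row_prod (S : comPzSemiRingType) n (F : 'I_n -> bool -> S) :
  \sum_(x : 'rV[bool]_n) \prod_j F j (x ord0 j) = \prod_j (F j true + F j false).
Proof.
under [RHS]eq_bigr do rewrite -big_bool.
rewrite bigA_distr_bigA /= (reindex (fun f : {ffun 'I_n -> bool} => \row_j f j)) /=.
  by apply: eq_bigr => f _; apply: eq_bigr => j _; rewrite mxE.
exists (fun x : 'rV[bool]_n => [ffun j => x ord0 j]) => [f _ | x _].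
  by apply/ffunP => j; rewrite ffunE mxE.
by apply/rowP => j; rewrite mxE ffunE.
Qed.

Definition supp n (x : 'rV[bool]_n) : {set 'I_n} := [set j | x ord0 j].

Definition row_of_set n (A : {set 'I_n}) : 'rV[bool]_n := \row_j (j \in A).

Lemma supp_row_of_set n (A : {set 'I_n}) : supp (row_of_set A) = A.
Proof. by apply/setP => j; rewrite inE mxE. Qed.

Lemma weightE n (x : 'rV[bool]_n) : weight x = #|supp x|.
Proof. by []. Qed.

Lemma weight_row_of_set n (A : {set 'I_n}) : weight (row_of_set A) = #|A|.
Proof. by rewrite weightE supp_row_of_set. Qed.

Section BernoulliRows.
Variables (n : nat) (a : R).

Definition bern (x : 'rV[bool]_n) : R := \prod_j (if x ord0 j then a else 1 - a).

Definition Ebern (F : 'rV[bool]_n -> R) : R := \sum_x bern x * F x.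

Lemma eq_Ebern F G : F =1 G -> Ebern F = Ebern G.
Proof. by move=> FG; apply: eq_bigr => x _; rewrite FG. Qed.

Lemma Ebern_prod (H : 'I_n -> bool -> R) :
  Ebern (fun x => \prod_j H j (x ord0 j)) = \prod_j (a * H j true + (1 - a) * H j false).
Proof.
rewrite -(sum_row_prod (fun j c => (if c then a else 1 - a) * H j c)).
by apply: eq_bigr => x _; rewrite -big_split.
Qed.

Lemma sum_bern : \sum_x bern x = 1.
Proof.
transitivity (Ebern (fun=> \prod_(j < n) 1)).
  by apply: eq_bigr => x _; rewrite big1_eq mulr1.
rewrite (Ebern_prod (fun _ _ => 1)).
by apply: big1 => j _; rewrite !mulr1 addrC subrK.
Qed.

Lemma Ebern_sum (phi : 'I_n -> bool -> R) :
  Ebern (fun x => \sum_j phi j (x ord0 j)) = \sum_j (a * phi j true + (1 - a) * phi j false).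
Proof.
rewrite /Ebern; under eq_bigr do rewrite mulr_sumr.
rewrite exchange_big /=; apply: eq_bigr => j _.
have := Ebern_prod (fun k c => if k == j then phi j c else 1).
rewrite (bigD1 j) //= !eqxx big1 ?mulr1 => [<-|k /negbTE ->]; last first.
  by rewrite !mulr1 addrC subrK.
by apply: eq_bigr => x _; rewrite (bigD1 j) //= eqxx big1 ?mulr1 // => k /negbTE ->.
Qed.

Lemma EbernD F G : Ebern (fun x => F x + G x) = Ebern F + Ebern G.
Proof. by rewrite /Ebern -big_split; apply: eq_bigr => x _; rewrite mulrDr. Qed.

Lemma EbernZ k F : Ebern (fun x => k * F x) = k * Ebern F.
Proof. by rewrite /Ebern mulr_sumr; apply: eq_bigr => x _; rewrite mulrCA. Qed.

Lemma Ebern_cst k : Ebern (fun=> k) = k.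
Proof. by rewrite /Ebern -mulr_suml sum_bern mul1r. Qed.

Lemma Ebern_card_setI (A : {set 'I_n}) :
  Ebern (fun x => #|supp x :&: A|%:R) = #|A|%:R * a.
Proof.
transitivity (Ebern (fun x => \sum_j (x ord0 j && (j \in A))%:R)).
  by apply: eq_Ebern => x; rewrite natr_card_sum; apply: eq_bigr => j _; rewrite !inE.
rewrite (Ebern_sum (fun j c => (c && (j \in A))%:R)) natr_card_sum mulr_suml.
by apply: eq_bigr => j _; case: (j \in A); rewrite /=; ring.
Qed.

Lemma Ebern_weight : Ebern (fun x => (weight x)%:R) = n%:R * a.
Proof.
rewrite -[n in RHS]card_ord -cardsT -Ebern_card_setI.
by apply: eq_bigr => x _; rewrite setIT.
Qed.

Lemma Ebern_disjoint (A : {set 'I_n}) :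
  Ebern (fun x => (supp x :&: A == set0)%:R) = (1 - a) ^+ #|A|.
Proof.
have disj x : (supp x :&: A == set0)%:R = \prod_j (~~ (x ord0 j && (j \in A)))%:R :> R.
  have [/setP sx0|/set0Pn[j]] := eqVneq (supp x :&: A) set0.
    by rewrite big1 // => j _; have := sx0 j; rewrite !inE => ->.
  by rewrite !inE => /andP[xj jA]; rewrite (bigD1 j) //= xj jA mul0r.
transitivity (Ebern (fun x => \prod_j (~~ (x ord0 j && (j \in A)))%:R)).
  exact: eq_Ebern disj.
rewrite (Ebern_prod (fun j c => (~~ (c && (j \in A)))%:R)) -prodr_const.
rewrite [RHS]big_mkcond; apply: eq_bigr => j _.
by case: (j \in A); rewrite /=; ring.
Qed.

Lemma bern_gt0 x : 0 < a < 1 -> 0 < bern x.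
Proof. by case/andP=> a0 a1; apply: prodr_gt0 => j _; case: ifP => _; lra. Qed.

Lemma ler_Ebern F G : 0 < a < 1 -> (forall x, F x <= G x) -> Ebern F <= Ebern G.
Proof.
move=> a01 FG; apply: ler_sum => x _.
by apply: ler_wpM2l; [exact/ltW/bern_gt0 | exact: FG].
Qed.

(* No result type: the body is then read in ring_scope, not in R_scope. *)
Definition entropy_ln (t : R) := - t * ln t - (1 - t) * ln (1 - t).

Lemma Ebern_neg_ln_bern :
  0 < a < 1 -> Ebern (fun x => - ln (bern x)) = n%:R * entropy_ln a.
Proof.
case/andP=> a0 a1.
transitivity (Ebern (fun x => \sum_j (if x ord0 j then - ln a else - ln (1 - a)))).
  apply: eq_Ebern => x; rewrite ln_prod => [|j _]; last by case: ifP => _; lra.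
  by rewrite -sumrN; apply: eq_bigr => j _; case: ifP.
rewrite (Ebern_sum (fun _ c => if c then - ln a else - ln (1 - a))) sumr_const card_ord.
by rewrite -mulr_natl /entropy_ln; ring.
Qed.

End BernoulliRows.

Lemma h_entropy_ln (t : R) : h t = entropy_ln t / ln 2.
Proof.
rewrite /h /log2 /entropy_ln !(RmultE, RminusE, RoppE, RdivE, R1E).
by field; rewrite gt_eqF // ln2_gt0.
Qed.

Section BernoulliOnSupport.
Variables (n : nat) (b : R).

Definition bern_on (U x : 'rV[bool]_n) : R :=
  \prod_j (if U ord0 j then (if x ord0 j then b else 1 - b) else (~~ x ord0 j)%:R).

Lemma sum_bern_on U : \sum_x bern_on U x = 1.
Proof.
rewrite (sum_row_prod (fun j c => if U ord0 j then (if c then b else 1 - b) else (~~ c)%:R)).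
by apply: big1 => j _; case: (U ord0 j); rewrite /= ?RealsE; ring.
Qed.

Lemma bern_on_ge0 U x : 0 <= b <= 1 -> 0 <= bern_on U x.
Proof.
by case/andP=> b0 b1; apply: prodr_ge0 => j _; do 2 case: ifP => _ //=; rewrite ?RealsE; lra.
Qed.

Lemma sum_bern_on_comp_le (Y : finType) (f : 'rV[bool]_n -> Y) (U : Y -> 'rV[bool]_n) :
  0 <= b <= 1 -> \sum_x bern_on (U (f x)) x <= #|Y|%:R.
Proof.
move=> b01; have -> : #|Y|%:R = \sum_(y : Y) \sum_x bern_on (U y) x :> R.
  by under eq_bigr do rewrite sum_bern_on; rewrite sumr_const.
rewrite exchange_big /=; apply: ler_sum => x _.
by rewrite (bigD1 (f x)) //= lerDl; apply: sumr_ge0 => y _; apply: bern_on_ge0.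
Qed.

Lemma neg_ln_bern_on U x : 0 < b < 1 -> supp x \subset supp U ->
  0 < bern_on U x /\
  - ln (bern_on U x) = (weight x)%:R * (- ln b + ln (1 - b)) + (weight U)%:R * - ln (1 - b).
Proof.
case/andP=> b0 b1 /subsetP xU.
have xU' j : x ord0 j -> U ord0 j by move=> xj; have := xU j; rewrite !inE; apply.
have w_gt0 j : 0 < (if U ord0 j then (if x ord0 j then b else 1 - b) else (~~ x ord0 j)%:R).
  by case: (boolP (x ord0 j)) => [/xU' -> //|_]; case: ifP => _ //=; rewrite ?RealsE; lra.
split; first exact: prodr_gt0.
rewrite ln_prod // -sumrN !weightE !natr_card_sum !mulr_suml -big_split /=.
apply: eq_bigr => j _; rewrite !inE.
case: (boolP (x ord0 j)) => [xj|_]; first by rewrite (xU' j xj) /=; ring.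
by case: (U ord0 j); rewrite /= ?ln_1 ?RealsE; ring.
Qed.

End BernoulliOnSupport.

Section GroupTesting.
Variables (m n : nat) (M : 'M[bool]_(m, n)).
Local Notation outcome := (gt_outcome M).

Definition null_cols : {set 'I_n} := [set j | [forall i, ~~ M i j]].

Lemma gt_outcome_eq0 x : (outcome x == [ffun=> false]) = (supp x \subset null_cols).
Proof.
apply/eqP/subsetP => [out0 j | sub].
  rewrite !inE => xj; apply/forallP => i; apply/negP => Mij.
  by move/ffunP: out0 => /(_ i); rewrite !ffunE => /negbT/existsPn/(_ j); rewrite Mij xj.
apply/ffunP => i; rewrite !ffunE; apply/existsP => -[j /andP[Mij xj]].
by have := sub j; rewrite !inE xj => /(_ isT)/forallP/(_ i); rewrite Mij.
Qed.

Lemma gt_outcome_drop_null x : outcome (row_of_set (supp x :&: ~: null_cols)) = outcome x.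
Proof.
apply/ffunP => i; rewrite !ffunE; apply/existsP/existsP => -[j /andP[Mij xj]]; exists j.
  by move: xj; rewrite mxE !inE Mij => /andP[->].
rewrite mxE !inE Mij xj /=; apply/forallP => /(_ i); by rewrite Mij.
Qed.

Definition hull (y : {ffun 'I_m -> bool}) : 'rV[bool]_n :=
  row_of_set [set j | [exists x, (outcome x == y) && x ord0 j]].

Lemma supp_hull x : supp x \subset supp (hull (outcome x)).
Proof.
by apply/subsetP => j; rewrite supp_row_of_set !inE => xj; apply/existsP; exists x; rewrite eqxx.
Qed.

Lemma gt_outcome_hull x : outcome (hull (outcome x)) = outcome x.
Proof.
apply/ffunP => i; rewrite !ffunE; apply/existsP/existsP => -[j /andP[Mij]].
  rewrite mxE inE => /existsP[x' /andP[/eqP ox' x'j]].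
  move: ox' => /ffunP/(_ i); rewrite !ffunE => ox'i.
  by apply/existsP; rewrite -ox'i; apply/existsP; exists j; rewrite Mij.
move=> xj; exists j; rewrite Mij /=.
by have /subsetP/(_ j) := supp_hull x; rewrite !inE; apply.
Qed.

Definition comparable_weights (b : R) := forall x x' : 'rV[bool]_n,
  (0 < weight x)%nat -> (0 < weight x')%nat -> outcome x = outcome x' ->
  b * (weight x')%:R <= (weight x)%:R.

Variable b : R.
Hypotheses (b_gt0 : 0 < b) (weightsM : comparable_weights b).

Lemma card_null_cols_le : (0 < #|null_cols|)%nat -> b * #|null_cols|%:R <= 1.
Proof.
case/card_gt0P => j jZ.
have out0 (A : {set 'I_n}) : A \subset null_cols -> outcome (row_of_set A) = [ffun=> false].
  by move=> AZ; apply/eqP; rewrite gt_outcome_eq0 supp_row_of_set.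
have := weightsM (x := row_of_set [set j]) (x' := row_of_set null_cols).
rewrite !weight_row_of_set cards1; apply=> //; first by apply/card_gt0P; exists j.
by rewrite !out0 // sub1set.
Qed.

Lemma hull_weight_le x :
  b * (weight (hull (outcome x)))%:R <=
  #|supp x :&: ~: null_cols|%:R + b * #|null_cols|%:R * (supp x :&: ~: null_cols == set0)%:R.
Proof.
have [x_null|/set0Pn[j jx]] := eqVneq (supp x :&: ~: null_cols) set0.
  rewrite x_null cards0 add0r mulr1 ler_pM2l // ler_nat weightE.
  apply: subset_leq_card; rewrite -gt_outcome_eq0 gt_outcome_hull gt_outcome_eq0.
  by rewrite -setD_eq0 setDE x_null.
rewrite mulr0 addr0 -(weight_row_of_set (supp x :&: ~: null_cols)).
apply: weightsM; rewrite ?gt_outcome_drop_null ?gt_outcome_hull //.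
  by rewrite weight_row_of_set; apply/card_gt0P; exists j.
apply/card_gt0P; exists j; have /subsetP/(_ j) := supp_hull x.
by move: jx; rewrite !inE => /andP[-> _]; apply.
Qed.

End GroupTesting.

Section EntropyBound.
Variables (m n : nat) (M : 'M[bool]_(m, n)) (b : R).
Hypotheses (b_gt0 : 0 < b) (b_lt1 : b < 1) (weightsM : comparable_weights M b).
Hypothesis tail_small :
  forall k, (0 < k)%nat -> b * k%:R <= 1 -> (1 - b ^+ 2) ^+ (n - k) <= b.
Local Notation outcome := (gt_outcome M).

Lemma Ebern_hull_le :
  Ebern (b ^+ 2) (fun x => (weight (hull M (outcome x)))%:R) <= n%:R * b.
Proof.
have b2_01 : 0 < b ^+ 2 < 1 by rewrite exprn_gt0 //= exprn_ilt1 ?ltW.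
set Z := null_cols M; set z : R := #|Z|%:R.
have cardZC : (#|~: Z| + #|Z| = n)%nat by rewrite addnC cardsC card_ord.
(* Inputs hidden in the null columns all have outcome 0, whose hull can be as
   large as Z; this happens with probability (1 - b^2)^(n - #|Z|) <= b. *)
have tail : b * z * (1 - b ^+ 2) ^+ #|~: Z| <= b * z * b.
  have [Z0|Z_gt0] := posnP #|Z|; first by rewrite /z Z0 mulr0 !mul0r.
  rewrite ler_pM2l ?mulr_gt0 ?ltr0n // -(addnK #|Z| #|~: Z|) cardZC.
  exact: tail_small Z_gt0 (card_null_cols_le weightsM Z_gt0).
rewrite -(ler_pM2l b_gt0) -EbernZ.
apply: le_trans (ler_Ebern b2_01 (hull_weight_le b_gt0 weightsM)) _.
have nE : n%:R = #|~: Z|%:R + z :> R by rewrite -natrD cardZC.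
by rewrite EbernD EbernZ Ebern_card_setI Ebern_disjoint nE; lra.
Qed.

Lemma entropy_bound :
  n%:R * entropy_ln (b ^+ 2) <= m%:R * ln 2 + n%:R * b * entropy_ln b.
Proof.
have b01 : 0 < b < 1 by apply/andP.
have b01' : 0 <= b <= 1 by rewrite !ltW.
have b2_01 : 0 < b ^+ 2 < 1 by rewrite exprn_gt0 //= exprn_ilt1 ?ltW.
have two_m_gt0 : 0 < 2 ^+ m :> R by rewrite exprn_gt0.
(* Code x by its outcome (m bits) and a Bernoulli(b) code inside its hull. *)
pose g x := bern_on b (hull M (outcome x)) x / 2 ^+ m.
have neg_ln_g x : 0 < g x /\ - ln (g x) = m%:R * ln 2 +
    (- ln b + ln (1 - b)) * (weight x)%:R + - ln (1 - b) * (weight (hull M (outcome x)))%:R.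
  have [pos neg_ln] := neg_ln_bern_on b01 (supp_hull M x).
  split; first exact: divr_gt0.
  by rewrite /g lnM ?invr_gt0 // lnV // ln_expn // opprD neg_ln; ring.
have sum_g : \sum_x g x <= 1.
  rewrite -mulr_suml ler_pdivrMr // mul1r.
  have := sum_bern_on_comp_le outcome (hull M) b01'.
  by rewrite card_ffun card_bool card_ord natrX.
have : Ebern (b ^+ 2) (fun x : 'rV_n => - ln (bern (b ^+ 2) x))
       <= Ebern (b ^+ 2) (fun x => - ln (g x)).
  rewrite /Ebern; apply: gibbs => // [x|x|].
  - exact: bern_gt0.
  - exact: (proj1 (neg_ln_g x)).
  - exact: sum_bern.
rewrite Ebern_neg_ln_bern // (eq_Ebern _ (fun x => proj2 (neg_ln_g x))).
rewrite !EbernD Ebern_cst !EbernZ Ebern_weight.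
have c_ge0 : 0 <= - ln (1 - b) by rewrite oppr_ge0 ln_le0 ?subr_gt0 ?gerBl ?ltW.
have := ler_wpM2l c_ge0 Ebern_hull_le.
by rewrite /entropy_ln; lra.
Qed.

Lemma binary_entropy_bound : n%:R * (h (b ^+ 2) - b * h b) <= m%:R.
Proof.
have ln2_neq0 : ln 2 != 0 by rewrite gt_eqF ?ln2_gt0.
rewrite !h_entropy_ln [X in X <= _](_ : _ =
  (n%:R * entropy_ln (b ^+ 2) - n%:R * b * entropy_ln b) / ln 2); last by field.
by rewrite ler_pdivrMr ?ln2_gt0 //; have := entropy_bound; lra.
Qed.

End EntropyBound.

Lemma approx_usable_comparable_weights (Delta : R) m n (M : 'M[bool]_(m, n)) :
  1 < Delta -> approx_usable Delta M -> comparable_weights M (1 / Delta ^+ 2).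
Proof.
move=> D1 [dec dec_ok] x x' wx wx' out_eq.
have [_ /RleP hi] := dec_ok x wx; have [/RleP lo _] := dec_ok x' wx'.
move: lo hi; rewrite -out_eq; set d := dec _; rewrite !RealsE.
set w := (weight x)%:R; set w' := (weight x')%:R.
have w_gt0 : 0 < w by rewrite ltr0n.
have w'_gt0 : 0 < w' by rewrite ltr0n.
have D_gt0 : 0 < Delta by lra.
rewrite ler_pdivlMr // ler_pdivrMr // => lo hi.
have -> : 1 / Delta ^+ 2 * w' = 1 / Delta * w' / Delta by field; rewrite gt_eqF.
by rewrite ler_pdivrMr //; lra.
Qed.

Lemma expr_eventually_le (q eps : R) :
  0 <= q < 1 -> 0 < eps -> exists K, forall k, (K <= k)%nat -> q ^+ k <= eps.
Proof.
case/andP=> q0 q1 /RltP eps_gt0.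
have /RltP q_abs : `|q| < 1 by rewrite ger0_norm.
have [K HK] := pow_lt_1_zero q q_abs eps eps_gt0.
exists K => k /ssrnat.leP Kk; have /RltP := HK k Kk.
by rewrite RabsE RpowE ger0_norm ?exprn_ge0 // => /ltW.
Qed.

Lemma tail_small_eventually (b : R) : 0 < b < 1 ->
  exists N, forall n, (N <= n)%nat ->
    forall k, (0 < k)%nat -> b * k%:R <= 1 -> (1 - b ^+ 2) ^+ (n - k) <= b.
Proof.
case/andP=> b_gt0 b_lt1.
have [K HK] : exists K, forall k, (K <= k)%nat -> (1 - b ^+ 2) ^+ k <= b.
  apply: expr_eventually_le => //; rewrite subr_ge0 exprn_ile1 ?ltW //=.
  by rewrite gtrBl exprn_gt0.
pose D := (Num.truncn b^-1).+1.
have bD : 1 < b * D%:R by rewrite -ltr_pdivrMl // mulr1 truncnS_gt.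
exists (K + D)%nat => n KDn k _ bk; apply: HK.
have kD : (k < D)%nat by rewrite -(ltr_nat R) -(ltr_pM2l b_gt0); lra.
by apply: leq_trans (leq_sub2r k KDn); rewrite -addnBA ?leq_addr // ltnW.
Qed.

Lemma inv_sqr_in01 (x : R) : 1 < x -> 0 < 1 / x ^+ 2 < 1.
Proof.
move=> x_gt1; have x_gt0 : 0 < x by lra.
rewrite divr_gt0 ?exprn_gt0 //= ltr_pdivrMr ?exprn_gt0 // mul1r.
by rewrite expr_gt1 ?ltW.
Qed.

Local Close Scope ring_scope.
Local Open Scope R_scope.

Theorem corollary1 (Delta : R) : 1 < Delta ->
  exists N : nat, forall (n m : nat), (N <= n)%nat ->
    forall M : 'M[bool]_(m, n), approx_usable Delta M ->
      INR n * (h (1 / Delta ^ 4) - 1 / Delta ^ 2 * h (1 / Delta ^ 2)) <= INR m.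
Proof.
move=> /RltP D1; have /andP[b_gt0 b_lt1] := inv_sqr_in01 D1.
have [N tailN] := tail_small_eventually (inv_sqr_in01 D1).
exists N => n m nN M HM; apply/RleP.
rewrite !(RmultE, RminusE, RdivE, RpowE, INRE, R1E).
have weightsM := approx_usable_comparable_weights D1 HM.
have := binary_entropy_bound b_gt0 b_lt1 weightsM (tailN n nN).
by rewrite expr_div_n expr1n -exprM.
Qed.
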